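(* Let $\gamma:S^n\to\mathbb{R}_+$ be continuous and set $\widetilde W=\alpha_N^{-1}\circ Id(\mathcal{W}_\gamma)\subset S^{n+1}$. Then $\widetilde W=\widetilde W^{\circ}$ if and only if $\widetilde W$ is of constant width $\pi/2$.
   Context: $\mathcal{W}_\gamma=\bigcap_{\theta\in S^n}\{x\in\mathbb{R}^{n+1}: x\cdot\theta\le\gamma(\theta)\}$ is the Wulff shape of $\gamma$. $N=(0,\dots,0,1)\in S^{n+1}$, $Id(x)=(x,1)$, and $\alpha_N(P_1,\dots,P_{n+2})=(P_1/P_{n+2},\dots,P_{n+1}/P_{n+2},1)$ on $\{P\in S^{n+1}:P_{n+2}>0\}$ (central projection). For $P\in S^{n+1}$, $H(P)=\{Q\in S^{n+1}:P\cdot Q\ge0\}$. The spherical polar set of $\widetilde W\subset S^{n+1}$ is $\widetilde W^\circ=\bigcap_{P\in\widetilde W}H(P)$. $|PQ|=\arccos(P\cdot Q)$. $H(P)$ supports a spherical convex body $\widetilde W$ if $\widetilde W\subset H(P)$ and $\partial\widetilde W\cap\partial H(P)\ne\emptyset$. The lune $H(P)\cap H(Q)$ ($P\ne\pm Q$) has thickness $\pi-|PQ|$. For $H(P)$ supporting $\widetilde W$, $\mathrm{width}_{H(P)}\widetilde W$ is the minimum thickness of lunes $H(P)\cap H(Q)\supset\widetilde W$ with $H(Q)$ supporting $\widetilde W$; $\widetilde W$ is of constant width $\rho$ if this equals $\rho$ for every supporting hemisphere $H(P)$. *)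

From Stdlib Require Import Reals Lra.
Open Scope R_scope.

(* Points of R^k are represented by functions nat -> R of which only the
   coordinates 0 .. k-1 are used.  Coordinate i (0-based) corresponds to the
   paper's coordinate i+1.  All predicates below depend only on the first
   k coordinates. *)

Fixpoint sumR (k : nat) (f : nat -> R) : R :=
  match k with
  | O => 0
  | S k' => sumR k' f + f k'
  end.

Definition dot (k : nat) (x y : nat -> R) : R := sumR k (fun i => x i * y i).

Definition dist (k : nat) (x y : nat -> R) : R :=
  sqrt (sumR k (fun i => (x i - y i) * (x i - y i))).

(* Unit sphere S^(k-1) in R^k *)
Definition sphere (k : nat) (x : nat -> R) : Prop := dot k x x = 1.

Definition veq (k : nat) (x y : nat -> R) : Prop := forall i, (i < k)%nat -> x i = y i.

Definition vopp (x : nat -> R) : nat -> R := fun i => - x i.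

Definition continuous_on_sphere (n : nat) (gamma : (nat -> R) -> R) : Prop :=
  forall th, sphere (S n) th ->
  forall eps, 0 < eps -> exists delta, 0 < delta /\
    forall th', sphere (S n) th' -> dist (S n) th th' < delta ->
      Rabs (gamma th - gamma th') < eps.

Definition wulff (n : nat) (gamma : (nat -> R) -> R) (x : nat -> R) : Prop :=
  forall th, sphere (S n) th -> dot (S n) x th <= gamma th.

(* Central projection alpha_N on the open hemisphere {P_{n+2} > 0} of S^(n+1)
   (last coordinate has 0-based index n+1), and Id(x) = (x,1). *)
Definition alphaN (n : nat) (P : nat -> R) : nat -> R :=
  fun i => if Nat.ltb i (S n) then P i / P (S n) else 1.

Definition Id_emb (n : nat) (x : nat -> R) : nat -> R :=
  fun i => if Nat.ltb i (S n) then x i else 1.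

(* alpha_N^{-1}(Id(A)) for A subset R^(n+1): points P of S^(n+1) with P_{n+2} > 0
   whose central projection equals Id(x) for some x in A *)
Definition tilde (n : nat) (A : (nat -> R) -> Prop) (P : nat -> R) : Prop :=
  sphere (S (S n)) P /\ 0 < P (S n) /\
  exists x, A x /\ veq (S (S n)) (alphaN n P) (Id_emb n x).

Definition hemi (k : nat) (P Q : nat -> R) : Prop := sphere k Q /\ 0 <= dot k P Q.

Definition polar (k : nat) (W : (nat -> R) -> Prop) (Q : nat -> R) : Prop :=
  sphere k Q /\ forall P, W P -> 0 <= dot k P Q.

Definition sboundary (k : nat) (W : (nat -> R) -> Prop) (x : nat -> R) : Prop :=
  sphere k x /\
  forall eps, 0 < eps ->
    (exists y, sphere k y /\ W y /\ dist k x y < eps) /\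
    (exists z, sphere k z /\ ~ W z /\ dist k x z < eps).

Definition hemi_boundary (k : nat) (P Q : nat -> R) : Prop :=
  sphere k Q /\ dot k P Q = 0.

Definition supports (k : nat) (W : (nat -> R) -> Prop) (P : nat -> R) : Prop :=
  (forall Q, W Q -> hemi k P Q) /\
  exists Q, sboundary k W Q /\ hemi_boundary k P Q.

Definition sdist (k : nat) (P Q : nat -> R) : R := acos (dot k P Q).

Definition lune_thickness (k : nat) (P Q : nat -> R) : R := PI - sdist k P Q.

Definition width_lune (k : nat) (W : (nat -> R) -> Prop) (P Q : nat -> R) : Prop :=
  sphere k Q /\ ~ veq k P Q /\ ~ veq k P (vopp Q) /\
  supports k W Q /\
  (forall R0, W R0 -> hemi k P R0 /\ hemi k Q R0).

Definition width_is (k : nat) (W : (nat -> R) -> Prop) (P : nat -> R) (rho : R) : Prop :=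
  (exists Q, width_lune k W P Q /\ lune_thickness k P Q = rho) /\
  (forall Q, width_lune k W P Q -> rho <= lune_thickness k P Q).

Definition constant_width (k : nat) (W : (nat -> R) -> Prop) (rho : R) : Prop :=
  forall P, sphere k P -> supports k W P -> width_is k W P rho.

(* The key objects are the polar cone K = {V : P.V >= 0 for all P in W~} and,
   for V on the boundary of K, the supporting hemisphere H(V/|V|), which always
   touches W~ because W~ is compact.  If W~ is self-polar, a supporting H(P) has
   P in W~, the touching point Q of W~ lies in W~ as well, and H(P) cap H(Q) is
   a lune of thickness pi/2; every other admissible lune has P.Q >= 0, so it is
   at least as thick.  Conversely, assume constant width pi/2.  If Q in W~ were
   not in K, walking from the north pole N (which lies in K) towards Q leaves K
   at a supporting direction V; the width condition yields a supporting Q' with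
   V.Q' = 0, which is impossible since Q'.N > 0 and Q.Q' >= 0.  If Q in K were
   not in W~, some normal Z of the Wulff shape has Q.Z < 0; leaving K from Z
   towards -Q and from Q towards -Z gives two supporting hemispheres with
   obtuse normals, i.e. a lune of thickness < pi/2. *)

From Pilot Require Import Defs.
From Stdlib Require Import Reals Lra Lia Rtopology Classical ClassicalEpsilon
  FunctionalExtensionality.
Open Scope R_scope.

Lemma sumR_ext k f g :
  (forall i, (i < k)%nat -> f i = g i) -> sumR k f = sumR k g.
Proof.
  induction k as [|k IH]; intros H; simpl; auto.
  rewrite IH, (H k); auto; intros; apply H; lia.
Qed.

Lemma sumR_add k f g : sumR k (fun i => f i + g i) = sumR k f + sumR k g.
Proof. induction k as [|k IH]; simpl; [lra|]. rewrite IH; lra. Qed.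

Lemma sumR_scal k c f : sumR k (fun i => c * f i) = c * sumR k f.
Proof. induction k as [|k IH]; simpl; [lra|]. rewrite IH; lra. Qed.

Lemma sumR_const0 k : sumR k (fun _ => 0) = 0.
Proof. induction k as [|k IH]; simpl; [|rewrite IH]; lra. Qed.

Lemma sumR_ge0 k f : (forall i, (i < k)%nat -> 0 <= f i) -> 0 <= sumR k f.
Proof.
  induction k as [|k IH]; intros H; simpl; [lra|].
  pose proof (H k ltac:(lia)); pose proof (IH ltac:(intros; apply H; lia)); lra.
Qed.

Lemma sumR_term_le k f i :
  (forall i, (i < k)%nat -> 0 <= f i) -> (i < k)%nat -> f i <= sumR k f.
Proof.
  induction k as [|k IH]; intros H Hi; simpl; [lia|].
  pose proof (H k ltac:(lia)).
  destruct (Nat.eq_dec i k) as [->|Hik].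
  - pose proof (sumR_ge0 k f ltac:(intros; apply H; lia)); lra.
  - pose proof (IH ltac:(intros; apply H; lia) ltac:(lia)); lra.
Qed.

Definition vcomb (a : R) (x : nat -> R) (b : R) (y : nat -> R) : nat -> R :=
  fun i => a * x i + b * y i.

Definition normz (k : nat) (V : nat -> R) : nat -> R :=
  fun i => / sqrt (dot k V V) * V i.

Lemma dot_S k x y : dot (S k) x y = dot k x y + x k * y k.
Proof. reflexivity. Qed.

Lemma dot_sym k x y : dot k x y = dot k y x.
Proof. apply sumR_ext; intros; ring. Qed.

Lemma dot_ext k z x y : veq k x y -> dot k z x = dot k z y.
Proof. intros H; apply sumR_ext; intros i Hi; rewrite H; auto. Qed.

Lemma dot_scal k z c x : dot k z (fun i => c * x i) = c * dot k z x.
Proof. unfold dot; rewrite <- sumR_scal; apply sumR_ext; intros; ring. Qed.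

Lemma dot_vcomb_r k z a x b y :
  dot k z (vcomb a x b y) = a * dot k z x + b * dot k z y.
Proof.
  unfold dot, vcomb; rewrite <- !sumR_scal, <- sumR_add.
  apply sumR_ext; intros; ring.
Qed.

Lemma dot_vcomb_l k z a x b y :
  dot k (vcomb a x b y) z = a * dot k x z + b * dot k y z.
Proof. rewrite dot_sym, dot_vcomb_r, (dot_sym k z x), (dot_sym k z y); auto. Qed.

Lemma dot_vcomb_self k a x b y :
  dot k (vcomb a x b y) (vcomb a x b y)
  = a * a * dot k x x + 2 * a * b * dot k x y + b * b * dot k y y.
Proof. rewrite dot_vcomb_r, !dot_vcomb_l, (dot_sym k y x); ring. Qed.

Lemma dot_vopp_r k z x : dot k z (vopp x) = - dot k z x.
Proof.
  replace (vopp x) with (fun i => -1 * x i) by (extensionality i; unfold vopp; ring).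
  rewrite dot_scal; ring.
Qed.

Lemma dot_vopp_l k z x : dot k (vopp x) z = - dot k x z.
Proof. rewrite dot_sym, dot_vopp_r, dot_sym; auto. Qed.

Lemma dot_self_ge0 k x : 0 <= dot k x x.
Proof. apply sumR_ge0; intros; nra. Qed.

Lemma dot_self_eq0 k x y : dot k x x = 0 -> dot k x y = 0.
Proof.
  intros H; unfold dot; rewrite <- (sumR_const0 k); apply sumR_ext; intros i Hi.
  assert (x i * x i <= 0).
  { rewrite <- H; apply (sumR_term_le k (fun i => x i * x i)); auto; intros; nra. }
  assert (x i = 0) as -> by nra; ring.
Qed.

Lemma dot_self_gt0 k x y : dot k x y <> 0 -> 0 < dot k x x.
Proof.
  intros Hxy; destruct (dot_self_ge0 k x) as [|H0]; auto.
  exfalso; apply Hxy, dot_self_eq0; auto.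
Qed.

Lemma dot_wcs k x y t :
  0 < t -> 2 * Rabs (dot k x y) <= t * dot k x x + dot k y y / t.
Proof.
  intros Ht.
  pose proof (dot_self_ge0 k (vcomb t x 1 y)) as Hp.
  pose proof (dot_self_ge0 k (vcomb t x (-1) y)) as Hm.
  rewrite dot_vcomb_self in Hp, Hm.
  apply (Rmult_le_reg_r t); auto.
  replace ((t * dot k x x + dot k y y / t) * t)
    with (t * t * dot k x x + dot k y y) by (field; lra).
  unfold Rabs; destruct Rcase_abs; nra.
Qed.

Lemma dot_cs k x y : 2 * Rabs (dot k x y) <= dot k x x + dot k y y.
Proof. pose proof (dot_wcs k x y 1 Rlt_0_1); unfold Rdiv in H; rewrite Rinv_1 in H; lra. Qed.

Lemma dot_sphere_bound k x y : sphere k x -> sphere k y -> -1 <= dot k x y <= 1.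
Proof.
  unfold sphere; intros Hx Hy; pose proof (dot_cs k x y).
  unfold Rabs in *; destruct Rcase_abs; lra.
Qed.

Lemma sphere_coord_bound k x i : sphere k x -> (i < k)%nat -> Rabs (x i) <= 1.
Proof.
  intros Hx Hi; assert (x i * x i <= 1).
  { rewrite <- Hx; apply (sumR_term_le k (fun i => x i * x i)); auto; intros; nra. }
  unfold Rabs; destruct Rcase_abs; nra.
Qed.

Lemma sphere_vopp k x : sphere k x -> sphere k (vopp x).
Proof. unfold sphere; intros Hx; rewrite dot_vopp_l, dot_vopp_r; lra. Qed.

Lemma normz_dot_r k z V : dot k z (normz k V) = / sqrt (dot k V V) * dot k z V.
Proof. apply dot_scal. Qed.

Lemma normz_dot_l k z V : dot k (normz k V) z = / sqrt (dot k V V) * dot k V z.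
Proof. rewrite dot_sym, normz_dot_r, (dot_sym k z V); auto. Qed.

Lemma inv_sqrt_pos x : 0 < x -> 0 < / sqrt x.
Proof. intros; apply Rinv_0_lt_compat, sqrt_lt_R0; auto. Qed.

Lemma normz_sphere k V : 0 < dot k V V -> sphere k (normz k V).
Proof.
  intros H; unfold sphere; rewrite normz_dot_l, normz_dot_r.
  pose proof (sqrt_lt_R0 _ H); pose proof (sqrt_sqrt _ (Rlt_le _ _ H)) as E.
  set (r := sqrt (dot k V V)) in *; rewrite <- E; field; lra.
Qed.

Lemma dist_dot k x y :
  Defs.dist k x y = sqrt (dot k (vcomb 1 x (-1) y) (vcomb 1 x (-1) y)).
Proof. unfold Defs.dist; f_equal; apply sumR_ext; intros; unfold vcomb; ring. Qed.

Lemma dist_lt_iff k x y e :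
  0 < e -> Defs.dist k x y < e <-> dot k (vcomb 1 x (-1) y) (vcomb 1 x (-1) y) < e * e.
Proof.
  intros He; rewrite dist_dot; pose proof (dot_self_ge0 k (vcomb 1 x (-1) y)).
  split; intros H'.
  - apply Rnot_le_lt; intros Hc; apply sqrt_le_1_alt in Hc.
    rewrite sqrt_square in Hc; lra.
  - rewrite <- (sqrt_square e) by lra; apply sqrt_lt_1_alt; lra.
Qed.

Lemma dist_self k x : Defs.dist k x x = 0.
Proof.
  rewrite dist_dot, dot_self_eq0, ?sqrt_0; auto.
  rewrite dot_vcomb_self; ring.
Qed.

(* Cauchy-Schwarz with weight [e] turns [|x - y| < e] into [|r.(x - y)| < e]. *)
Lemma dot_sphere_dist_lt k r x y e :
  sphere k r -> 0 < e -> Defs.dist k x y < e -> Rabs (dot k r x - dot k r y) < e.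
Proof.
  intros Hr He Hd; apply dist_lt_iff in Hd; auto.
  pose proof (dot_wcs k r (vcomb 1 x (-1) y) e He) as Hw.
  rewrite Hr, dot_vcomb_r in Hw.
  assert (dot k (vcomb 1 x (-1) y) (vcomb 1 x (-1) y) / e < e).
  { apply (Rmult_lt_reg_r e); auto; unfold Rdiv; rewrite Rmult_assoc, Rinv_l; lra. }
  replace (dot k r x - dot k r y) with (1 * dot k r x + -1 * dot k r y) by ring; lra.
Qed.

(* Rotating [x] slightly towards [-y] inside the plane spanned by [x] and [y]. *)
Lemma sphere_near_neg_side k x y : sphere k x -> sphere k y -> dot k x y = 0 ->
  forall eps, 0 < eps -> exists z, sphere k z /\ dot k y z < 0 /\ Defs.dist k x z < eps.
Proof.
  unfold sphere; intros Hx Hy Hxy eps He.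
  set (d := Rmin (eps * eps / 4) (1 / 2)).
  assert (0 < d) by (apply Rmin_pos; nra).
  assert (d <= 1 / 2) by apply Rmin_r.
  assert (d <= eps * eps / 4) by apply Rmin_l.
  set (c := 1 - d); set (s := sqrt (1 - c * c)).
  assert (0 < 1 - c * c) by (unfold c; nra).
  assert (0 < s) by (apply sqrt_lt_R0; auto).
  assert (s * s = 1 - c * c) by (apply sqrt_sqrt; lra).
  exists (vcomb c x (- s) y); split; [|split].
  - rewrite dot_vcomb_self, Hx, Hy, Hxy; nra.
  - rewrite dot_vcomb_r, (dot_sym k y x), Hxy, Hy; nra.
  - apply dist_lt_iff; auto.
    replace (vcomb 1 x (-1) (vcomb c x (- s) y)) with (vcomb (1 - c) x s y)
      by (extensionality i; unfold vcomb; ring).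
    rewrite dot_vcomb_self, Hx, Hy, Hxy.
    replace (s * s) with (1 - c * c) by auto; unfold c; nra.
Qed.

Lemma acos_le_PI2 d : 0 <= d <= 1 -> acos d <= PI / 2.
Proof.
  intros Hd; apply Rnot_lt_le; intros H; pose proof (acos_bound d); pose proof PI_RGT_0.
  assert (cos (acos d) < 0) by (apply cos_lt_0; lra); rewrite cos_acos in *; lra.
Qed.

Lemma acos_gt_PI2 d : -1 <= d < 0 -> PI / 2 < acos d.
Proof.
  intros Hd; apply Rnot_le_lt; intros H; pose proof (acos_bound d); pose proof PI_RGT_0.
  assert (0 <= cos (acos d)) by (apply cos_ge_0; lra); rewrite cos_acos in *; lra.
Qed.

Lemma lune_thickness_orth k P Q : dot k P Q = 0 -> lune_thickness k P Q = PI / 2.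
Proof. intros H; unfold lune_thickness, sdist; rewrite H, acos_0; field. Qed.

Lemma lune_thickness_eq_PI2 k P Q : sphere k P -> sphere k Q ->
  lune_thickness k P Q = PI / 2 -> dot k P Q = 0.
Proof.
  unfold lune_thickness, sdist; intros HP HQ H.
  pose proof (dot_sphere_bound k P Q HP HQ) as Hb.
  rewrite <- (cos_acos _ Hb); replace (acos (dot k P Q)) with (PI / 2) by lra.
  apply cos_PI2.
Qed.

Lemma lune_thickness_ge_PI2 k P Q : sphere k P -> sphere k Q ->
  0 <= dot k P Q -> PI / 2 <= lune_thickness k P Q.
Proof.
  unfold lune_thickness, sdist; intros HP HQ H.
  pose proof (dot_sphere_bound k P Q HP HQ); pose proof (acos_le_PI2 (dot k P Q)); lra.
Qed.

Lemma lune_thickness_lt_PI2 k P Q : sphere k P -> sphere k Q ->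
  dot k P Q < 0 -> lune_thickness k P Q < PI / 2.
Proof.
  unfold lune_thickness, sdist; intros HP HQ H.
  pose proof (dot_sphere_bound k P Q HP HQ); pose proof (acos_gt_PI2 (dot k P Q)); lra.
Qed.

Definition incr (phi : nat -> nat) : Prop := forall j, (phi j < phi (S j))%nat.

Lemma incr_ge phi : incr phi -> forall j, (j <= phi j)%nat.
Proof. intros H j; induction j; [lia|]; specialize (H j); lia. Qed.

Lemma incr_lt phi : incr phi -> forall a b, (a < b)%nat -> (phi a < phi b)%nat.
Proof.
  intros H a b Hab; induction b as [|b IH]; [lia|].
  specialize (H b); destruct (Nat.eq_dec a b) as [->|]; [lia|].
  specialize (IH ltac:(lia)); lia.
Qed.

Lemma incr_comp phi psi : incr phi -> incr psi -> incr (fun j => phi (psi j)).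
Proof. intros H1 H2 j; apply incr_lt; auto. Qed.

Lemma Un_cv_subseq u l phi : Un_cv u l -> incr phi -> Un_cv (fun j => u (phi j)) l.
Proof.
  intros H Hphi eps He; destruct (H eps He) as [N HN]; exists N; intros j Hj.
  apply HN; pose proof (incr_ge phi Hphi j); lia.
Qed.

Lemma Un_cv_const c : Un_cv (fun _ => c) c.
Proof. intros e He; exists O; intros; unfold Rdist; rewrite Rminus_diag, Rabs_R0; auto. Qed.

Lemma inv_INR_S_pos j : 0 < / INR (S j).
Proof. apply Rinv_0_lt_compat, lt_0_INR; lia. Qed.

Lemma inv_INR_S_small eps :
  0 < eps -> exists N : nat, forall j, (j >= N)%nat -> / INR (S j) < eps.
Proof.
  intros He; destruct (archimed_cor1 eps He) as [N [H1 H2]]; exists N; intros j Hj.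
  apply Rle_lt_trans with (/ INR N); auto.
  apply Rinv_le_contravar; [apply lt_0_INR; auto | apply le_INR; lia].
Qed.

Lemma inv_INR_S_incr phi j : incr phi -> / INR (S (phi j)) <= / INR (S j).
Proof.
  intros Hphi; apply Rinv_le_contravar; [apply lt_0_INR; lia|].
  apply le_INR; pose proof (incr_ge phi Hphi j); lia.
Qed.

Lemma Un_cv_inv_INR_S : Un_cv (fun j => / INR (S j)) 0.
Proof.
  intros eps He; destruct (inv_INR_S_small eps He) as [N HN]; exists N; intros j Hj.
  unfold Rdist; rewrite Rminus_0_r, Rabs_right; [auto|].
  apply Rle_ge, Rlt_le, inv_INR_S_pos.
Qed.

Lemma Un_cv_dot k (u v : nat -> nat -> R) L M :
  (forall i, (i < k)%nat -> Un_cv (fun j => u j i) (L i)) ->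
  (forall i, (i < k)%nat -> Un_cv (fun j => v j i) (M i)) ->
  Un_cv (fun j => dot k (u j) (v j)) (dot k L M).
Proof.
  induction k as [|k IH]; intros Hu Hv; unfold dot; simpl.
  - apply Un_cv_const.
  - apply CV_plus; [apply IH | apply CV_mult]; intros; try apply Hu; try apply Hv; lia.
Qed.

Lemma Un_cv_dist_lt k (u : nat -> nat -> R) L :
  (forall i, (i < k)%nat -> Un_cv (fun j => u j i) (L i)) ->
  forall d, 0 < d -> exists N, forall j, (j >= N)%nat -> Defs.dist k L (u j) < d.
Proof.
  intros HL d Hd.
  assert (Hcv : Un_cv (fun j => dot k (vcomb 1 L (-1) (u j)) (vcomb 1 L (-1) (u j)))
                  (dot k (vcomb 1 L (-1) L) (vcomb 1 L (-1) L))).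
  { apply Un_cv_dot; intros i Hi; unfold vcomb;
      apply CV_plus; try apply Un_cv_const;
      apply (CV_mult (fun _ => -1)); auto using Un_cv_const. }
  rewrite dot_self_eq0 in Hcv by (rewrite dot_vcomb_self; ring).
  destruct (Hcv (d * d) ltac:(nra)) as [N HN]; exists N; intros j Hj.
  apply dist_lt_iff; auto; specialize (HN j Hj).
  unfold Rdist in HN; rewrite Rminus_0_r in HN.
  pose proof (Rle_abs (dot k (vcomb 1 L (-1) (u j)) (vcomb 1 L (-1) (u j)))); lra.
Qed.

Lemma bounded_subseq (u : nat -> R) : (forall j, Rabs (u j) <= 1) ->
  exists phi l, incr phi /\ Un_cv (fun j => u (phi j)) l.
Proof.
  intros Hb.
  destruct (Bolzano_Weierstrass u (fun c => -1 <= c <= 1) (compact_P3 (-1) 1))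
    as [l Hl].
  { intros j; specialize (Hb j); unfold Rabs in Hb; destruct Rcase_abs in Hb; lra. }
  assert (Hp : forall Nj : nat * nat, exists p,
             (fst Nj <= p)%nat /\ Rabs (u p - l) < / INR (S (snd Nj))).
  { intros [N j]; destruct (Hl (disc l (mkposreal _ (inv_INR_S_pos j))) N) as [p Hp].
    - exists (mkposreal _ (inv_INR_S_pos j)); intros x Hx; exact Hx.
    - exists p; exact Hp. }
  destruct (choice _ Hp) as [pick Hpick].
  exists (fix phi j := match j with
                      | O => pick (O, O)
                      | S j' => pick (S (phi j'), j)
                      end), l.
  split.
  - intros j; simpl; match goal with |- (_ < pick ?Nj)%nat => destruct (Hpick Nj) as [H _] end.
    simpl in H; lia.
  - intros eps He; destruct (inv_INR_S_small eps He) as [N HN]; exists N; intros j Hj.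
    apply Rlt_trans with (/ INR (S j)); [|apply HN; auto].
    destruct j; apply Hpick.
Qed.

Lemma bounded_subseq_vec k (u : nat -> nat -> R) :
  (forall j i, (i < k)%nat -> Rabs (u j i) <= 1) ->
  exists phi L, incr phi /\ forall i, (i < k)%nat -> Un_cv (fun j => u (phi j) i) (L i).
Proof.
  induction k as [|k IH]; intros Hb.
  - exists (fun j => j), (fun _ => 0); split; [intros j; lia | intros; lia].
  - destruct IH as [phi [L [Hphi HL]]]; [intros; apply Hb; lia|].
    destruct (bounded_subseq (fun j => u (phi j) k)) as [psi [l [Hpsi Hl]]];
      [intros; apply Hb; lia|].
    exists (fun j => phi (psi j)), (fun i => if Nat.eqb i k then l else L i).
    split; [apply incr_comp; auto|].
    intros i Hi; destruct (Nat.eqb_spec i k) as [->|]; auto.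
    apply (Un_cv_subseq (fun j => u (phi j) i)); auto; apply HL; lia.
Qed.

Lemma sphere_subseq k (u : nat -> nat -> R) : (forall j, sphere k (u j)) ->
  exists phi L, incr phi /\ sphere k L /\
    forall i, (i < k)%nat -> Un_cv (fun j => u (phi j) i) (L i).
Proof.
  intros Hu.
  destruct (bounded_subseq_vec k u) as [phi [L [Hphi HL]]].
  { intros j i Hi; apply (sphere_coord_bound k); auto. }
  exists phi, L; repeat split; auto.
  apply (UL_sequence (fun j => dot k (u (phi j)) (u (phi j)))).
  - apply Un_cv_dot; auto.
  - replace (fun j => dot k (u (phi j)) (u (phi j))) with (fun _ : nat => 1)
      by (extensionality j; symmetry; apply Hu).
    apply Un_cv_const.
Qed.

Lemma lub_affine_nonneg (E : R -> Prop) sm a0 a1 :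
  0 <= a0 -> 0 <= sm -> is_lub E sm ->
  (forall s, E s -> 0 <= (1 - s) * a0 + s * a1) -> 0 <= (1 - sm) * a0 + sm * a1.
Proof.
  intros H0 Hsm [_ Hlub] HE; destruct (Rle_or_lt a0 a1); [nra|].
  assert (sm <= a0 / (a0 - a1)).
  { apply Hlub; intros s Hs; specialize (HE s Hs).
    apply (Rmult_le_reg_r (a0 - a1)); [lra|].
    unfold Rdiv; rewrite Rmult_assoc, Rinv_l; lra. }
  assert (sm * (a0 - a1) <= a0).
  { apply (Rmult_le_compat_r (a0 - a1)) in H1; [|lra].
    unfold Rdiv in H1; rewrite Rmult_assoc, Rinv_l in H1; lra. }
  nra.
Qed.

Definition seq_closed (k : nat) (C : (nat -> R) -> Prop) : Prop :=
  forall (u : nat -> nat -> R) L, (forall j, C (u j)) ->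
    (forall i, (i < k)%nat -> Un_cv (fun j => u j i) (L i)) -> C L.

Section PolarCone.

Variable k : nat.
Variable C : (nat -> R) -> Prop.
Hypothesis C_sphere : forall P, C P -> sphere k P.

Definition polar_cone (V : nat -> R) : Prop := forall P, C P -> 0 <= dot k P V.

Lemma polar_cone_closed Q :
  (forall eps, 0 < eps -> exists y, polar_cone y /\ Defs.dist k Q y < eps) ->
  polar_cone Q.
Proof.
  intros Happ R HR; apply Rnot_lt_le; intros Hneg.
  destruct (Happ (- dot k R Q)) as [y [Hy Hd]]; [lra|].
  pose proof (dot_sphere_dist_lt k R Q y (- dot k R Q) (C_sphere R HR) ltac:(lra) Hd).
  specialize (Hy R HR); unfold Rabs in *; destruct Rcase_abs; lra.
Qed.

Lemma supports_polar_cone P : supports k C P -> polar_cone P.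
Proof. intros [Hsub _] Q HQ; rewrite dot_sym; apply Hsub; auto. Qed.

Lemma supports_of_touch P L :
  sphere k P -> polar_cone P -> C L -> dot k L P = 0 -> supports k C P.
Proof.
  intros HP HK HL HLP; split.
  - intros Q HQ; split; [auto | rewrite dot_sym; auto].
  - exists L; split; [split; [auto|] | split; [auto | rewrite dot_sym; auto]].
    intros eps He; split.
    + exists L; repeat split; auto; rewrite dist_self; auto.
    + destruct (sphere_near_neg_side k L P (C_sphere L HL) HP HLP eps He)
        as [z [Hz [HPz Hd]]].
      exists z; repeat split; auto; intros HzC.
      specialize (HK z HzC); rewrite dot_sym in HK; lra.
Qed.

Lemma self_polar_constant_width :
  (forall Q, C Q <-> polar k C Q) -> constant_width k C (PI / 2).
Proof.
  intros Hself P HP Hsupp.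
  assert (HCpol : forall Q, C Q -> polar_cone Q)
    by (intros Q HQ; exact (proj2 (proj1 (Hself Q) HQ))).
  assert (HPC : C P) by (apply Hself; split; [|apply supports_polar_cone]; auto).
  destruct Hsupp as [_ [Q [[HQ Happ] [_ HPQ]]]].
  assert (HQC : C Q).
  { apply Hself; split; auto; apply polar_cone_closed; intros eps He.
    destruct (Happ eps He) as [[y [_ [Hy Hd]]] _]; exists y; auto. }
  split.
  - exists Q; split; [|apply lune_thickness_orth; auto].
    split; [auto|]; split; [|split; [|split]].
    + intros Hv; unfold sphere in HP; rewrite (dot_ext k P P Q Hv) in HP; lra.
    + intros Hv; pose proof (dot_ext k Q _ _ Hv) as E.
      rewrite dot_vopp_r, dot_sym, HPQ in E; unfold sphere in HQ; lra.
    + apply (supports_of_touch Q P); auto.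
    + intros R HR; split; split; auto; rewrite dot_sym; apply HCpol; auto.
  - intros Q' [HQ' [_ [_ [HsQ' _]]]]; apply lune_thickness_ge_PI2; auto.
    exact (supports_polar_cone Q' HsQ' P HPC).
Qed.

Lemma polar_cone_perturb V W eps :
  0 < eps -> (forall X, C X -> eps <= dot k X V) ->
  exists d, 0 < d /\ forall t, 0 <= t <= d -> polar_cone (vcomb 1 V t W).
Proof.
  intros He Hge; pose proof (dot_self_ge0 k W).
  exists (eps / (1 + dot k W W)); split; [apply Rdiv_lt_0_compat; lra|].
  intros t Ht X HX; rewrite dot_vcomb_r.
  pose proof (dot_cs k X W) as Hcs; rewrite (C_sphere X HX) in Hcs.
  specialize (Hge X HX).
  assert (t * (1 + dot k W W) <= eps).
  { destruct Ht as [_ Ht]; apply (Rmult_le_compat_r (1 + dot k W W)) in Ht; [|lra].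
    unfold Rdiv in Ht; rewrite Rmult_assoc, Rinv_l in Ht; lra. }
  pose proof (Rle_abs (- dot k X W)) as Habs; rewrite Rabs_Ropp in Habs.
  assert (0 <= t * (Rabs (dot k X W) + dot k X W)) by (apply Rmult_le_pos; lra).
  assert (0 <= t * (1 + dot k W W - 2 * Rabs (dot k X W))) by (apply Rmult_le_pos; lra).
  nra.
Qed.

(* [s] is the supremum of the parameters whose segment point lies in the polar
   cone; beyond it the cone is left, so no positive margin can remain at [s]. *)
Lemma polar_cone_exit A0 A1 : polar_cone A0 -> ~ polar_cone A1 ->
  exists s, 0 <= s < 1 /\ polar_cone (vcomb (1 - s) A0 s A1) /\
    forall eps, 0 < eps -> exists X, C X /\ dot k X (vcomb (1 - s) A0 s A1) < eps.
Proof.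
  intros H0 H1; set (seg := fun s => vcomb (1 - s) A0 s A1).
  set (E := fun s => 0 <= s <= 1 /\ polar_cone (seg s)).
  assert (HE0 : E 0).
  { split; [lra|]; intros P HP; unfold seg; rewrite dot_vcomb_r.
    specialize (H0 P HP); lra. }
  destruct (completeness E) as [sm Hsm];
    [exists 1; intros s Hs; apply Hs | exists 0; auto|].
  assert (Hsm0 : 0 <= sm) by (apply Hsm; auto).
  assert (Hsm1 : sm <= 1) by (apply Hsm; intros s Hs; apply Hs).
  assert (HKsm : polar_cone (seg sm)).
  { intros P HP; unfold seg; rewrite dot_vcomb_r; apply (lub_affine_nonneg E); auto.
    intros s [_ Hs]; specialize (Hs P HP); unfold seg in Hs.
    rewrite dot_vcomb_r in Hs; auto. }
  assert (Hsm1' : sm < 1).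
  { destruct Hsm1 as [Hlt|Heq]; auto; exfalso; apply H1; intros P HP; subst sm.
    specialize (HKsm P HP); unfold seg in HKsm; rewrite dot_vcomb_r in HKsm; lra. }
  exists sm; split; [split; auto|]; split; [exact HKsm|].
  intros eps He; apply NNPP; intros Hnone.
  destruct (polar_cone_perturb (seg sm) (vcomb 1 A1 (-1) A0) eps He) as [d [Hd Hpert]].
  { intros X HX; apply Rnot_lt_le; intros Hlt; apply Hnone; exists X; auto. }
  set (t := Rmin d (1 - sm)).
  assert (0 < t) by (apply Rmin_pos; lra).
  assert (t <= d) by apply Rmin_l.
  assert (t <= 1 - sm) by apply Rmin_r.
  assert (E (sm + t)).
  { split; [lra|].
    replace (seg (sm + t)) with (vcomb 1 (seg sm) t (vcomb 1 A1 (-1) A0))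
      by (extensionality i; unfold seg, vcomb; ring).
    apply Hpert; lra. }
  assert (sm + t <= sm) by (apply Hsm; auto); lra.
Qed.

Hypothesis C_closed : seq_closed k C.

Lemma polar_cone_touch V : polar_cone V ->
  (forall eps, 0 < eps -> exists X, C X /\ dot k X V < eps) ->
  exists L, C L /\ dot k L V = 0.
Proof.
  intros HK Hinf.
  destruct (choice (fun j X => C X /\ dot k X V < / INR (S j))) as [u Hu].
  { intros j; apply Hinf, inv_INR_S_pos. }
  destruct (sphere_subseq k u) as [phi [L [Hphi [_ HL]]]]; [intros j; apply C_sphere, Hu|].
  assert (HLC : C L) by (apply (C_closed (fun j => u (phi j))); auto; intros; apply Hu).
  exists L; split; auto; apply Rle_antisym; [|apply HK; auto].
  apply (@Rle_cv_lim (fun j => dot k (u (phi j)) V) (fun j => / INR (S j))).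
  - intros j; left; apply (Rlt_le_trans _ _ _ (proj2 (Hu (phi j)))).
    apply inv_INR_S_incr; auto.
  - apply (Un_cv_dot k (fun j => u (phi j)) (fun _ => V)); auto.
    intros; apply Un_cv_const.
  - apply Un_cv_inv_INR_S.
Qed.

Lemma polar_cone_exit_supports A0 A1 : polar_cone A0 -> ~ polar_cone A1 ->
  exists s, 0 <= s < 1 /\
    let V := vcomb (1 - s) A0 s A1 in
    0 < dot k V V -> sphere k (normz k V) /\ supports k C (normz k V).
Proof.
  intros H0 H1; destruct (polar_cone_exit A0 A1 H0 H1) as [s [Hs [HK Hinf]]].
  exists s; split; auto; intros V HV.
  destruct (polar_cone_touch V HK Hinf) as [L [HL HLV]].
  pose proof (inv_sqrt_pos _ HV).
  assert (HP : sphere k (normz k V)) by (apply normz_sphere; auto).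
  split; auto; apply (supports_of_touch _ L); auto.
  - intros X HX; rewrite normz_dot_r; apply Rmult_le_pos; [lra | apply HK; auto].
  - rewrite normz_dot_r, HLV; ring.
Qed.

Lemma constant_width_supports_dot_ge0 P1 P2 :
  constant_width k C (PI / 2) ->
  sphere k P1 -> sphere k P2 -> supports k C P1 -> supports k C P2 ->
  ~ veq k P1 (vopp P2) -> 0 <= dot k P1 P2.
Proof.
  intros Hcw HP1 HP2 Hs1 Hs2 Hopp; apply Rnot_lt_le; intros Hneg.
  destruct (Hcw P1 HP1 Hs1) as [_ Hmin].
  assert (Hlune : width_lune k C P1 P2).
  { split; auto; split; [|split; [auto|split; auto]].
    - intros Hv; unfold sphere in HP1; rewrite (dot_ext k P1 P1 P2 Hv) in HP1; lra.
    - intros R HR; split; [apply Hs1 | apply Hs2]; auto. }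
  specialize (Hmin P2 Hlune); pose proof (lune_thickness_lt_PI2 k P1 P2 HP1 HP2 Hneg); lra.
Qed.

Variable N : nat -> R.
Hypothesis C_N : C N.
Hypothesis C_north : forall P, C P -> 0 < dot k P N.
Hypothesis polar_north : forall Q, sphere k Q -> polar_cone Q -> 0 < dot k Q N.
Hypothesis C_cut : forall Q, sphere k Q -> 0 < dot k Q N -> ~ C Q ->
  exists Z, polar_cone Z /\ 0 < dot k N Z /\ dot k Q Z < 0.

Lemma supports_not_antipodal P1 P2 :
  sphere k P1 -> sphere k P2 -> supports k C P1 -> supports k C P2 -> ~ veq k P1 (vopp P2).
Proof.
  intros HP1 HP2 Hs1 Hs2 Hv.
  pose proof (polar_north P1 HP1 (supports_polar_cone P1 Hs1)).
  pose proof (polar_north P2 HP2 (supports_polar_cone P2 Hs2)).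
  pose proof (dot_ext k N _ _ Hv) as E; rewrite dot_vopp_r, !(dot_sym k N) in E; lra.
Qed.

Lemma constant_width_polar_cone Q :
  constant_width k C (PI / 2) -> C Q -> polar_cone Q.
Proof.
  intros Hcw HQ; apply NNPP; intros HnK.
  assert (HKN : polar_cone N) by (intros P HP; apply Rlt_le, C_north; auto).
  pose proof (C_north Q HQ) as HQN.
  destruct (polar_cone_exit_supports N Q HKN HnK) as [s [Hs Hsupp]].
  set (V := vcomb (1 - s) N s Q) in *.
  assert (HNN : 0 < dot k N N) by (apply (dot_self_gt0 k N Q); rewrite dot_sym; lra).
  assert (HVN : 0 < dot k V N) by (unfold V; rewrite dot_vcomb_l; nra).
  assert (HV : 0 < dot k V V) by (apply (dot_self_gt0 k V N); lra).
  destruct (Hsupp HV) as [HP HsP].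
  destruct (Hcw _ HP HsP) as [[Q' [[HQ' [_ [_ [HsQ' _]]]] Hth]] _].
  pose proof (lune_thickness_eq_PI2 k _ _ HP HQ' Hth) as HPQ'.
  pose proof (polar_north Q' HQ' (supports_polar_cone Q' HsQ')) as HQ'N.
  pose proof (supports_polar_cone Q' HsQ' Q HQ) as HQQ'.
  pose proof (inv_sqrt_pos _ HV).
  assert (HVQ' : dot k V Q' = (1 - s) * dot k Q' N + s * dot k Q Q')
    by (unfold V; rewrite dot_vcomb_l, (dot_sym k N Q'); auto).
  rewrite normz_dot_l, HVQ' in HPQ'.
  assert (0 < (1 - s) * dot k Q' N + s * dot k Q Q') by nra.
  nra.
Qed.

Lemma constant_width_polar_in Q :
  constant_width k C (PI / 2) -> sphere k Q -> polar_cone Q -> C Q.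
Proof.
  intros Hcw HQ HKQ; apply NNPP; intros HnC.
  pose proof (polar_north Q HQ HKQ) as HQN.
  destruct (C_cut Q HQ HQN HnC) as [Z [HKZ [HNZ HQZ]]].
  assert (HnKQ : ~ polar_cone (vopp Q)).
  { intros H; pose proof (polar_north _ (sphere_vopp k Q HQ) H).
    rewrite dot_vopp_l in *; lra. }
  assert (HnKZ : ~ polar_cone (vopp Z)).
  { intros H; specialize (H N C_N); rewrite dot_vopp_r in H; lra. }
  destruct (polar_cone_exit_supports Z (vopp Q) HKZ HnKQ) as [a [Ha HsuppA]].
  destruct (polar_cone_exit_supports Q (vopp Z) HKQ HnKZ) as [b [Hb HsuppB]].
  set (A := vcomb (1 - a) Z a (vopp Q)) in *.
  set (B := vcomb (1 - b) Q b (vopp Z)) in *.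
  assert (HAB : dot k A B < 0).
  { unfold A, B; rewrite dot_vcomb_l, !dot_vcomb_r, !dot_vopp_l, !dot_vopp_r.
    rewrite (dot_sym k Z Q); unfold sphere in HQ; rewrite HQ.
    pose proof (dot_self_ge0 k Z).
    assert (0 < (1 - a) * (1 - b)) by nra.
    assert (0 <= (1 - a) * b) by nra.
    assert (0 <= a * b) by nra.
    nra. }
  assert (HA : 0 < dot k A A) by (apply (dot_self_gt0 k A B); lra).
  assert (HB : 0 < dot k B B) by (apply (dot_self_gt0 k B A); rewrite dot_sym; lra).
  destruct (HsuppA HA) as [HP1 Hs1]; destruct (HsuppB HB) as [HP2 Hs2].
  pose proof (constant_width_supports_dot_ge0 _ _ Hcw HP1 HP2 Hs1 Hs2
                (supports_not_antipodal _ _ HP1 HP2 Hs1 Hs2)) as H12.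
  rewrite normz_dot_l, normz_dot_r in H12.
  pose proof (inv_sqrt_pos _ HA); pose proof (inv_sqrt_pos _ HB).
  assert (0 < / sqrt (dot k A A) * / sqrt (dot k B B)) by nra.
  nra.
Qed.

Lemma constant_width_self_polar :
  constant_width k C (PI / 2) -> forall Q, C Q <-> polar k C Q.
Proof.
  intros Hcw Q; split.
  - intros HQ; split; [auto | apply constant_width_polar_cone; auto].
  - intros [HQ HK]; apply constant_width_polar_in; auto.
Qed.

End PolarCone.

Definition north (n : nat) : nat -> R := fun i => if Nat.eqb i (S n) then 1 else 0.

(* The outer normal [(-th, gamma th)] of the face of the cone over the Wulff
   shape cut out by the half-space [x.th <= gamma th]. *)
Definition wulff_normal (n : nat) (gamma : (nat -> R) -> R) (th : nat -> R) : nat -> R :=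
  fun i => if Nat.eqb i (S n) then gamma th else - th i.

Lemma dot_north_lt n k P : (k <= S n)%nat -> dot k P (north n) = 0.
Proof.
  induction k as [|k IH]; intros Hk; [reflexivity|].
  rewrite dot_S, IH by lia; unfold north.
  destruct (Nat.eqb_spec k (S n)); [lia | ring].
Qed.

Lemma dot_north n P : dot (S (S n)) P (north n) = P (S n).
Proof. rewrite dot_S, dot_north_lt by lia; unfold north; rewrite Nat.eqb_refl; ring. Qed.

Lemma dot_wulff_normal n gamma th P :
  dot (S (S n)) P (wulff_normal n gamma th) = P (S n) * gamma th - dot (S n) P th.
Proof.
  rewrite dot_S; unfold wulff_normal at 2; rewrite Nat.eqb_refl.
  replace (dot (S n) P (wulff_normal n gamma th)) with (dot (S n) P (vopp th)).
  - rewrite dot_vopp_r; ring.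
  - apply dot_ext; intros i Hi; unfold wulff_normal, vopp.
    destruct (Nat.eqb_spec i (S n)); [lia | auto].
Qed.

Lemma tilde_wulff_iff n gamma P : tilde n (wulff n gamma) P <->
  sphere (S (S n)) P /\ 0 < P (S n) /\
  forall th, sphere (S n) th -> dot (S n) P th <= gamma th * P (S n).
Proof.
  assert (Hx : forall x, veq (S (S n)) (alphaN n P) (Id_emb n x) ->
                 forall th, dot (S n) x th = dot (S n) P th / P (S n)).
  { intros x Hv th; unfold dot, Rdiv; rewrite Rmult_comm, <- sumR_scal.
    apply sumR_ext; intros i Hi; specialize (Hv i ltac:(lia)).
    unfold alphaN, Id_emb in Hv; replace (Nat.ltb i (S n)) with true in Hv
      by (symmetry; apply Nat.ltb_lt; lia).
    rewrite <- Hv; unfold Rdiv; ring. }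
  split.
  - intros [Hs [Hp [x [Hw Hv]]]]; repeat split; auto; intros th Hth.
    specialize (Hw th Hth); rewrite (Hx x Hv) in Hw.
    apply (Rmult_le_compat_r (P (S n))) in Hw; [|lra].
    unfold Rdiv in Hw; rewrite Rmult_assoc, Rinv_l in Hw; lra.
  - intros [Hs [Hp Hc]]; repeat split; auto.
    assert (Hv : veq (S (S n)) (alphaN n P) (Id_emb n (fun i => P i / P (S n))))
      by (intros i Hi; unfold alphaN, Id_emb; destruct (Nat.ltb i (S n)); auto).
    exists (fun i => P i / P (S n)); split; auto; intros th Hth.
    rewrite (Hx _ Hv); apply (Rmult_le_reg_r (P (S n))); auto.
    unfold Rdiv; rewrite Rmult_assoc, Rinv_l by lra; specialize (Hc th Hth); lra.
Qed.

Lemma tilde_wulff_sphere n gamma P : tilde n (wulff n gamma) P -> sphere (S (S n)) P.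
Proof. apply tilde_wulff_iff. Qed.

Lemma tilde_wulff_north_pos n gamma P :
  tilde n (wulff n gamma) P -> 0 < dot (S (S n)) P (north n).
Proof. rewrite dot_north; apply tilde_wulff_iff. Qed.

Lemma north_tilde_wulff n gamma :
  (forall th, sphere (S n) th -> 0 < gamma th) -> tilde n (wulff n gamma) (north n).
Proof.
  intros hpos; apply tilde_wulff_iff; repeat split.
  - unfold sphere; rewrite dot_north; unfold north; rewrite Nat.eqb_refl; auto.
  - unfold north; rewrite Nat.eqb_refl; lra.
  - intros th Hth; rewrite dot_sym, dot_north_lt by lia.
    unfold north; rewrite Nat.eqb_refl; specialize (hpos th Hth); lra.
Qed.

Lemma wulff_normal_polar n gamma th : sphere (S n) th ->
  polar_cone (S (S n)) (tilde n (wulff n gamma)) (wulff_normal n gamma th).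
Proof.
  intros Hth P HP; apply tilde_wulff_iff in HP as [_ [_ Hc]].
  rewrite dot_wulff_normal; specialize (Hc th Hth); lra.
Qed.

Lemma tilde_wulff_closed n gamma : seq_closed (S (S n)) (tilde n (wulff n gamma)).
Proof.
  intros u L Hu HL.
  assert (HuC : forall j, sphere (S (S n)) (u j) /\ 0 < u j (S n) /\
            forall th, sphere (S n) th -> dot (S n) (u j) th <= gamma th * u j (S n))
    by (intros j; apply tilde_wulff_iff, Hu).
  assert (HsL : sphere (S (S n)) L).
  { apply (UL_sequence (fun j => dot (S (S n)) (u j) (u j))); [apply Un_cv_dot; auto|].
    replace (fun j => dot (S (S n)) (u j) (u j)) with (fun _ : nat => 1)
      by (extensionality j; symmetry; apply HuC).
    apply Un_cv_const. }
  assert (Hc : forall th, sphere (S n) th -> 0 <= dot (S (S n)) L (wulff_normal n gamma th)).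
  { intros th Hth.
    apply (@Rle_cv_lim (fun _ => 0)
             (fun j => dot (S (S n)) (u j) (wulff_normal n gamma th))).
    - intros j; apply (wulff_normal_polar n gamma th Hth), Hu.
    - apply Un_cv_const.
    - apply Un_cv_dot; auto; intros; apply Un_cv_const. }
  assert (Hl0 : 0 <= L (S n)).
  { apply (@Rle_cv_lim (fun _ => 0) (fun j => u j (S n))); [|apply Un_cv_const|apply HL; lia].
    intros j; apply Rlt_le, HuC. }
  apply tilde_wulff_iff; repeat split; auto.
  - destruct Hl0 as [|Hl0]; auto; exfalso.
    assert (HsL' : sphere (S n) L) by (unfold sphere in *; rewrite dot_S, <- Hl0 in HsL; lra).
    specialize (Hc L HsL'); rewrite dot_wulff_normal, <- Hl0 in Hc.
    unfold sphere in HsL'; lra.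
  - intros th Hth; specialize (Hc th Hth); rewrite dot_wulff_normal in Hc; lra.
Qed.

Lemma continuous_pos_lower_bound n gamma :
  (forall th, sphere (S n) th -> 0 < gamma th) -> continuous_on_sphere n gamma ->
  exists m, 0 < m /\ forall th, sphere (S n) th -> m <= gamma th.
Proof.
  intros hpos hcont; apply NNPP; intros Hnone.
  assert (Hseq : forall j, exists th, sphere (S n) th /\ gamma th < / INR (S j)).
  { intros j; apply NNPP; intros Hj; apply Hnone; exists (/ INR (S j)).
    split; [apply inv_INR_S_pos|]; intros th Hth.
    apply Rnot_lt_le; intros Hlt; apply Hj; exists th; auto. }
  destruct (choice _ Hseq) as [T HT].
  destruct (sphere_subseq (S n) T) as [phi [L [Hphi [HL Hcv]]]]; [apply HT|].
  pose proof (hpos L HL) as HgL.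
  destruct (hcont L HL (gamma L / 2)) as [d [Hd Hnear]]; [lra|].
  destruct (Un_cv_dist_lt (S n) (fun j => T (phi j)) L Hcv d Hd) as [N1 HN1].
  destruct (inv_INR_S_small (gamma L / 2)) as [N2 HN2]; [lra|].
  set (j := Nat.max N1 N2).
  specialize (Hnear _ (proj1 (HT (phi j))) (HN1 j ltac:(lia))).
  pose proof (proj2 (HT (phi j))); pose proof (inv_INR_S_incr phi j Hphi).
  specialize (HN2 j ltac:(lia)).
  unfold Rabs in Hnear; destruct Rcase_abs in Hnear; lra.
Qed.

(* A polar vector [Q] with [Q_{n+2} = 0] would be a unit vector of [R^(n+1)];
   the tilted point [(-m Q, 1)], with [m] a lower bound of [gamma], then lies in
   the Wulff cone but has negative scalar product with [Q]. *)
Lemma tilde_wulff_polar_north n gamma Q :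
  (forall th, sphere (S n) th -> 0 < gamma th) -> continuous_on_sphere n gamma ->
  sphere (S (S n)) Q -> polar_cone (S (S n)) (tilde n (wulff n gamma)) Q ->
  0 < dot (S (S n)) Q (north n).
Proof.
  intros hpos hcont HQ HK; rewrite dot_north.
  pose proof (HK _ (north_tilde_wulff n gamma hpos)) as H0; rewrite dot_sym, dot_north in H0.
  destruct H0 as [|H0]; auto; exfalso.
  destruct (continuous_pos_lower_bound n gamma hpos hcont) as [m [Hm Hmg]].
  set (V := fun i => if Nat.eqb i (S n) then 1 else - m * Q i).
  assert (HV1 : V (S n) = 1) by (unfold V; rewrite Nat.eqb_refl; auto).
  assert (HVd : forall z, dot (S n) V z = - m * dot (S n) Q z).
  { intros z; rewrite (dot_sym _ V z), (dot_sym _ Q z), <- dot_scal; apply dot_ext.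
    intros i Hi; unfold V; destruct (Nat.eqb_spec i (S n)); [lia | ring]. }
  assert (HQs : sphere (S n) Q) by (unfold sphere in *; rewrite dot_S, <- H0 in HQ; lra).
  assert (HVV : 0 < dot (S (S n)) V V)
    by (rewrite dot_S, HV1; pose proof (dot_self_ge0 (S n) V); lra).
  pose proof (inv_sqrt_pos _ HVV).
  assert (Hin : tilde n (wulff n gamma) (normz (S (S n)) V)).
  { apply tilde_wulff_iff; split; [apply normz_sphere; auto|]; split.
    - unfold normz; rewrite HV1; lra.
    - intros th Hth; unfold normz.
      rewrite (dot_sym (S n) _ th), dot_scal, (dot_sym _ th V), HVd, HV1.
      pose proof (dot_sphere_bound (S n) Q th HQs Hth); pose proof (Hmg th Hth).
      assert (- m * dot (S n) Q th <= gamma th) by nra; nra. }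
  specialize (HK _ Hin); rewrite normz_dot_l, (dot_S (S n) V Q), HVd, <- H0 in HK.
  unfold sphere in HQs; rewrite HQs in HK; nra.
Qed.

Lemma tilde_wulff_cut n gamma Q :
  (forall th, sphere (S n) th -> 0 < gamma th) ->
  sphere (S (S n)) Q -> 0 < dot (S (S n)) Q (north n) -> ~ tilde n (wulff n gamma) Q ->
  exists Z, polar_cone (S (S n)) (tilde n (wulff n gamma)) Z /\
    0 < dot (S (S n)) (north n) Z /\ dot (S (S n)) Q Z < 0.
Proof.
  intros hpos HQ HQN HnC; rewrite dot_north in HQN.
  assert (Hth : exists th, sphere (S n) th /\ gamma th * Q (S n) < dot (S n) Q th).
  { apply NNPP; intros Hnone; apply HnC, tilde_wulff_iff; repeat split; auto.
    intros th Hth; apply Rnot_lt_le; intros Hlt; apply Hnone; exists th; auto. }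
  destruct Hth as [th [Hth Hlt]].
  exists (wulff_normal n gamma th); split; [apply wulff_normal_polar; auto|].
  rewrite !dot_wulff_normal, (dot_sym (S n) (north n) th), dot_north_lt by lia.
  unfold north; rewrite Nat.eqb_refl.
  specialize (hpos th Hth); split; lra.
Qed.

Theorem proposition3p1 (n : nat) (gamma : (nat -> R) -> R)
  (hpos : forall th, sphere (S n) th -> 0 < gamma th)
  (hcont : continuous_on_sphere n gamma) :
  (forall Q, tilde n (wulff n gamma) Q <-> polar (S (S n)) (tilde n (wulff n gamma)) Q)
  <-> constant_width (S (S n)) (tilde n (wulff n gamma)) (PI / 2).
Proof.
  pose proof (tilde_wulff_sphere n gamma) as Hsphere.
  split.
  - apply self_polar_constant_width; auto.
  - apply (constant_width_self_polar _ _ Hsphere (tilde_wulff_closed n gamma) (north n)).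
    + apply north_tilde_wulff; auto.
    + apply tilde_wulff_north_pos.
    + intros Q; apply tilde_wulff_polar_north; auto.
    + intros Q; apply tilde_wulff_cut; auto.
Qed.
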